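(* Let $X$ be a compact metric space, $T\colon X\to X$ a homeomorphism and $\mu$ an ergodic $T$-invariant Borel probability measure. Let $A,H\colon X\to\mathbb{GL}(2,\mathbb{R})$ be continuous and suppose the cocycles $A_T$ and $H_T$ are quasi-conjugated. Then (i) for every $\theta\in\mathbb{R}$ the cocycles generated by $A_\theta(x)=A(x)R_\theta$ and $H_\theta(x)=H(x)R_\theta$ over $T$ are quasi-conjugated, and (ii) $\lambda^+(A)=\lambda^+(H)$.
   Context: For continuous $B\colon X\to\mathbb{GL}(2,\mathbb{R})$, $B_T(x,v)=(Tx,B(x)v)$ on $X\times\mathbb{R}^2$, $B^n(x)=B(T^{n-1}x)\cdots B(x)$, and $\lambda^+(B)=\lim_{n\to\infty}\frac1n\log\|B^n(x)\|$ ($\mu$-a.e. constant). $R_\theta$ is the rotation by angle $\theta$. The cocycles $A_T$ and $H_T$ are quasi-conjugated if there exist families $\{B(x)\in\mathbb{SO}(2,\mathbb{R}):x\in X\}$ and $\{D(x)\in\mathbb{SO}(2,\mathbb{R}):x\in X\}$ (no continuity in $x$ required) such that $H(x)=D(x)^{-1}A(x)B(x)$ and $B(Tx)=s(x)D(x)$ with $s(x)\in\{1,-1\}$, for every $x\in X$. *)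

From HB Require Import structures.
From mathcomp Require Import all_boot all_order all_algebra.
From mathcomp Require Import all_classical all_reals all_analysis.
Set Implicit Arguments.
Unset Strict Implicit.
Unset Printing Implicit Defensive.
Import Order.TTheory GRing.Theory Num.Theory.
Import numFieldNormedType.Exports.
Local Open Scope classical_set_scope.
Local Open Scope ring_scope.

Definition borel (X : ptopologicalType) := g_sigma_algebraType (@open X).

Definition vnorm2 {R : realType} (v : 'cV[R]_2) : R :=
  Num.sqrt (v ord0 ord0 ^+ 2 + v (lift ord0 ord0) ord0 ^+ 2).

Definition opnorm2 {R : realType} (M : 'M[R]_2) : R :=
  sup [set vnorm2 (M *m v) | v in [set v : 'cV[R]_2 | vnorm2 v = 1]].

Fixpoint cocycle_pow {R : realType} {X : Type} (T : X -> X)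
    (B : X -> 'M[R]_2) (n : nat) (x : X) : 'M[R]_2 :=
  match n with
  | 0 => 1%:M
  | n'.+1 => B (iter n' T x) *m cocycle_pow T B n' x
  end.

Definition rotation {R : realType} (t : R) : 'M[R]_2 :=
  \matrix_(i < 2, j < 2)
    if (i : nat) == 0%N then (if (j : nat) == 0%N then cos t else - sin t)
    else (if (j : nat) == 0%N then sin t else cos t).

Definition SO2 {R : realType} (M : 'M[R]_2) : Prop :=
  M^T *m M = 1%:M /\ \det M = 1.

(* Quasi-conjugacy of the cocycles A_T and H_T (no continuity required). *)
Definition quasi_conjugated {R : realType} {X : Type} (T : X -> X)
    (A H : X -> 'M[R]_2) : Prop :=
  exists (Bf Df : X -> 'M[R]_2) (s : X -> R),
    forall x, [/\ SO2 (Bf x), SO2 (Df x), (s x = 1 \/ s x = -1),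
                  H x = invmx (Df x) *m A x *m Bf x
                & Bf (T x) = s x *: Df x].

Definition homeomorphism {X : topologicalType} (T : X -> X) : Prop :=
  continuous T /\
  exists Tinv : X -> X, [/\ cancel T Tinv, cancel Tinv T & continuous Tinv].

Definition invariant_measure {R : realType} {X : ptopologicalType}
    (mu : probability (borel X) R) (T : X -> X) : Prop :=
  forall E : set (borel X), measurable E -> mu (T @^-1` E) = mu E.

Definition ergodic {R : realType} {X : ptopologicalType}
    (mu : probability (borel X) R) (T : X -> X) : Prop :=
  forall E : set (borel X), measurable E -> T @^-1` E = E ->
    mu E = 0%E \/ mu E = 1%E.

(* "lambda^+(B) = c": for mu-a.e. x, (1/n) log ||B^n(x)|| --> c. *)
Definition top_lyap_is {R : realType} {X : ptopologicalType}
    (mu : probability (borel X) R) (T : X -> X) (B : X -> 'M[R]_2) (c : R)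
    : Prop :=
  {ae mu, forall x : borel X,
     (fun n : nat => (n%:R)^-1 * ln (opnorm2 (cocycle_pow T B n x)))
       @ \oo --> c}.

From HB Require Import structures.
From mathcomp Require Import all_boot all_order all_algebra.
From mathcomp Require Import all_classical all_reals all_analysis.
From mathcomp Require Import ring lra.
Import Order.TTheory GRing.Theory Num.Theory.
Import numFieldNormedType.Exports.
Local Open Scope classical_set_scope.
Local Open Scope ring_scope.

(* Along an orbit the quasi-conjugacy telescopes, since B(T^(k+1) x) D(T^k x)^-1
   is a sign: H^n(x) = +-D(T^(n-1) x)^-1 A^n(x) B(x).  The outer factors are
   orthogonal, so ||H^n(x)|| = ||A^n(x)|| for all x and n, and the Lyapunov
   exponents coincide; no compactness, continuity or ergodicity is needed.
   Part (i) holds with the same families B, D, because SO(2) is commutative,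
   so B(x) commutes with R_theta. *)

Lemma det_mx2 (R : comNzRingType) (M : 'M[R]_2) :
  \det M = M 0 0 * M 1 1 - M 0 1 * M 1 0.
Proof.
rewrite (expand_det_row _ 0) !big_ord_recl big_ord0 /cofactor !det_mx11 !mxE /=.
rewrite expr0 expr1 mul1r mulN1r addr0 mulrN.
by congr (_ * _ - _ * _); congr (M _ _); apply: val_inj.
Qed.

Lemma ord2P (i : 'I_2) : i = 0 \/ i = 1.
Proof. by case: i => [[|[|//]] ?]; [left | right]; apply: val_inj. Qed.

Lemma lift0_ord2 : lift ord0 ord0 = 1 :> 'I_2.
Proof. exact: val_inj. Qed.

Section OrthogonalMatrices.
Context {R : realType}.
Implicit Types (U V M D : 'M[R]_2) (v : 'cV[R]_2).

Definition orthogonal {n} (U : 'M[R]_n) := U^T *m U = 1%:M.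

Lemma orthogonal_tr {n} (U : 'M[R]_n) : orthogonal U -> orthogonal U^T.
Proof. by move=> UtU; rewrite /orthogonal trmxK; apply: mulmx1C. Qed.

Lemma orthogonalZ {n} c (U : 'M[R]_n) :
  c ^+ 2 = 1 -> orthogonal U -> orthogonal (c *: U).
Proof.
by move=> c2 UtU; rewrite /orthogonal !linearZ /= -scalemxAl scalerA -expr2 c2 scale1r.
Qed.

Lemma vnorm2E v : vnorm2 v = Num.sqrt ((v^T *m v) 0 0).
Proof.
rewrite /vnorm2 !mxE !big_ord_recr big_ord0 /= add0r !mxE -!expr2.
by congr (Num.sqrt (v _ _ ^+ 2 + v _ _ ^+ 2)); apply: val_inj.
Qed.

Lemma vnorm2_orthogonal U v : orthogonal U -> vnorm2 (U *m v) = vnorm2 v.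
Proof. by move=> UtU; rewrite !vnorm2E trmx_mul mulmxA -(mulmxA v^T) UtU mulmx1. Qed.

Lemma opnorm2_orthogonal U M V : orthogonal U -> orthogonal V ->
  opnorm2 (U *m M *m V) = opnorm2 M.
Proof.
move=> oU oV; rewrite /opnorm2; congr sup.
apply/seteqP; split => _ [v /= v1 <-].
  exists (V *m v); first by rewrite /= vnorm2_orthogonal.
  by rewrite -!mulmxA (vnorm2_orthogonal _ _ oU).
exists (V^T *m v); first by rewrite /= (vnorm2_orthogonal _ _ (orthogonal_tr _ oV)).
by rewrite -!mulmxA (mulmxA V) (mulmx1C oV) mul1mx (vnorm2_orthogonal _ _ oU).
Qed.

Lemma SO2_orthogonal D : SO2 D -> orthogonal D.
Proof. by case. Qed.

Lemma SO2_unit D : SO2 D -> D \in unitmx.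
Proof. by case=> _ detD; rewrite unitmxE detD unitr1. Qed.

Lemma SO2_invmx D : SO2 D -> invmx D = D^T.
Proof.
move=> SO2D; have [DtD _] := SO2D.
by rewrite -[LHS]mul1mx -DtD -mulmxA mulmxV ?mulmx1 ?SO2_unit.
Qed.

Lemma SO2_entries D : SO2 D -> D 1 1 = D 0 0 /\ D 1 0 = - D 0 1.
Proof.
case=> DtD; rewrite det_mx2 => detD.
have col_norm i : D 0 i ^+ 2 + D 1 i ^+ 2 = 1.
  have := congr1 (fun M : 'M[R]_2 => M i i) DtD.
  by rewrite !mxE !big_ord_recl big_ord0 !mxE eqxx addr0 -!expr2 lift0_ord2.
(* (a - d)^2 + (b + c)^2 = (a^2 + c^2) + (b^2 + d^2) - 2 (ad - bc) = 0 *)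
have sum_sq : (D 0 0 - D 1 1) ^+ 2 + (D 0 1 + D 1 0) ^+ 2 = 0.
  have := col_norm 0; have := col_norm 1; rewrite !expr2; nra.
move/eqP: sum_sq; rewrite paddr_eq0 ?sqr_ge0 // !sqrf_eq0 subr_eq0 addr_eq0.
by case/andP => /eqP -> /eqP ->; rewrite opprK.
Qed.

Lemma SO2_rotationC D t : SO2 D -> D *m rotation t = rotation t *m D.
Proof.
move=> /SO2_entries [D11 D10]; apply/matrixP => i j.
rewrite !mxE !big_ord_recl !big_ord0 !mxE /=.
case: (ord2P i) => ->; case: (ord2P j) => ->; rewrite /= ?lift0_ord2 ?D11 ?D10.
all: by change (@ord0 1) with (0 : 'I_2); ring.
Qed.

End OrthogonalMatrices.

Section QuasiConjugacy.
Variables (R : realType) (X : Type) (T : X -> X).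
Variables (A H Bf Df : X -> 'M[R]_2) (s : X -> R).
Hypothesis qc : forall x, [/\ SO2 (Bf x), SO2 (Df x), (s x = 1 \/ s x = -1),
  H x = invmx (Df x) *m A x *m Bf x & Bf (T x) = s x *: Df x].

Lemma quasi_conjugacy_rotation t x :
  [/\ SO2 (Bf x), SO2 (Df x), (s x = 1 \/ s x = -1),
    H x *m rotation t = invmx (Df x) *m (A x *m rotation t) *m Bf x
  & Bf (T x) = s x *: Df x].
Proof.
have [SO2B SO2D s_sign Hx BT] := qc x; split => //.
by rewrite Hx -!mulmxA SO2_rotationC.
Qed.

Lemma cocycle_pow_quasi_conjugacy n x : exists2 c : R, c ^+ 2 = 1 &
  cocycle_pow T H n.+1 x = c *: ((Df (iter n T x))^T *m cocycle_pow T A n.+1 x *m Bf x).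
Proof.
elim: n => [|n [c c2 IH]].
  by exists 1; rewrite ?expr1n // scale1r /= !mulmx1; have [_ /SO2_invmx <- _ ->] := qc x.
set y := iter n T x; have [_ SO2Dy s_sign _ BTy] := qc y.
have [_ SO2DTy _ HTy _] := qc (T y).
exists (s y * c).
  by rewrite exprMn c2 mulr1; case: s_sign => ->; rewrite ?sqrrN expr1n.
change (H (T y) *m cocycle_pow T H n.+1 x = (s y * c) *:
  ((Df (T y))^T *m (A (T y) *m cocycle_pow T A n.+1 x) *m Bf x)).
rewrite IH HTy BTy (SO2_invmx _ SO2DTy) -!scalemxAr -scalemxAl scalerA.
rewrite mulrC -/y; congr (_ *: _); rewrite [LHS]mulmxA; congr (_ *m _).
by rewrite [LHS]mulmxA -(mulmxA _ (Df y)) (mulmx1C (SO2_orthogonal _ SO2Dy)) mulmx1 -mulmxA.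
Qed.

Lemma opnorm2_cocycle_pow_quasi_conjugacy n x :
  opnorm2 (cocycle_pow T H n x) = opnorm2 (cocycle_pow T A n x).
Proof.
case: n => [//|n]; have [c c2 ->] := cocycle_pow_quasi_conjugacy n x.
have [SO2B _ _ _ _] := qc x; have [_ SO2D _ _ _] := qc (iter n T x).
rewrite scalemxAl scalemxAl opnorm2_orthogonal //; last exact: SO2_orthogonal.
by apply: orthogonalZ => //; apply/orthogonal_tr/SO2_orthogonal.
Qed.

End QuasiConjugacy.

Lemma top_lyap_is_opnorm2_eq (R : realType) (X : ptopologicalType)
    (mu : probability (borel X) R) (T : X -> X) (A H : X -> 'M[R]_2) c :
  (forall n x, opnorm2 (cocycle_pow T H n x) = opnorm2 (cocycle_pow T A n x)) ->
  top_lyap_is mu T A c <-> top_lyap_is mu T H c.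
Proof.
move=> opnorm_eq.
have seq_eq x : (fun n : nat => n%:R^-1 * ln (opnorm2 (cocycle_pow T A n x))) =
    (fun n : nat => n%:R^-1 * ln (opnorm2 (cocycle_pow T H n x))).
  by apply/funext => n; rewrite opnorm_eq.
by split; apply: filterS => x; rewrite seq_eq.
Qed.

Theorem lemma2p1 (R : realType) (X : pseudoPMetricType R)
  (T : X -> X) (mu : probability (borel X) R) (A H : X -> 'M[R]_2) :
  hausdorff_space X -> compact [set: X] ->
  homeomorphism T -> invariant_measure mu T -> ergodic mu T ->
  continuous A -> continuous H ->
  (forall x, A x \in unitmx) -> (forall x, H x \in unitmx) ->
  quasi_conjugated T A H ->
  (forall theta : R,
     quasi_conjugated T (fun x => A x *m rotation theta) (fun x => H x *m rotation theta))
  /\ (forall c : R, top_lyap_is mu T A c <-> top_lyap_is mu T H c).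
Proof.
move=> _ _ _ _ _ _ _ _ _ [Bf [Df [s qc]]]; split.
  by move=> t; exists Bf, Df, s; apply: quasi_conjugacy_rotation.
move=> c; apply: top_lyap_is_opnorm2_eq.
exact: opnorm2_cocycle_pow_quasi_conjugacy qc.
Qed.
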